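(* Let $m,n$ be non-negative integers. For $y\in\mathbb{R}$ define \[ R_{m,n}(y)=\int_{-1}^1P_n(x)\,P_{n+m}(x+y)\,dx . \] Then \[ R_{m,n}(y)=\dfrac{\Gamma\left(m+n+\frac{1}{2}\right)}{\Gamma(m+1)\Gamma\left(n+\frac{3}{2}\right)}(2y)^m\ {}_4F_3\left(\begin{array}{c}-\frac{m}{2},\frac{1-m}{2},\frac{1-m}{2},\frac{2-m}{2}\\ 1-m,\ \frac{1}{2}-m-n,\ n+\frac{3}{2}\end{array};\dfrac{4}{y^2}\right). \]
   Context: $P_n$ is the Legendre polynomial ($P_0=1$, $P_1(x)=x$, $(n+1)P_{n+1}(x)=(2n+1)xP_n(x)-nP_{n-1}(x)$). ${}_4F_3$ is the generalized hypergeometric series $\sum_k\frac{(a_1)_k\cdots(a_4)_k}{(b_1)_k(b_2)_k(b_3)_k}\frac{z^k}{k!}$ with $(a)_k$ the Pochhammer symbol; here it terminates (at the first upper parameter that is a non-positive integer), so $y^m\,{}_4F_3(\dots;4/y^2)$ is a polynomial in $y$ and the right-hand side is understood as this polynomial. *)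

From Stdlib Require Import Reals Lra Lia.
From Coquelicot Require Import Coquelicot.
Open Scope R_scope.

(* Legendre polynomials via the three-term recurrence:
   P_0 = 1, P_1 = x, (n+1) P_{n+1} = (2n+1) x P_n - n P_{n-1}. *)
Fixpoint legendre_pair (n : nat) (x : R) : R * R :=
  (* returns (P_n x, P_{n+1} x) *)
  match n with
  | O => (1, x)
  | S k => let (p, q) := legendre_pair k x in
           (q, ((2 * INR k + 3) * x * q - (INR k + 1) * p) / (INR k + 2))
  end.

Definition legendreP (n : nat) (x : R) : R := fst (legendre_pair n x).

Definition Gamma (s : R) : R :=
  RInt_gen (fun t => Rpower t (s - 1) * exp (- t))
           (at_right 0) (Rbar_locally p_infty).

Fixpoint poch (a : R) (k : nat) : R :=
  match k with
  | O => 1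
  | S j => poch a j * (a + INR j)
  end.

(* k-th term coefficient of 4F3(a1,a2,a3,a4; b1,b2,b3; z) (without z^k). *)
Definition hyp43_coef (a1 a2 a3 a4 b1 b2 b3 : R) (k : nat) : R :=
  poch a1 k * poch a2 k * poch a3 k * poch a4 k
  / (poch b1 k * poch b2 k * poch b3 k * INR (Factorial.fact k)).

Definition Rmn (m n : nat) (y : R) : R :=
  RInt (fun x => legendreP n x * legendreP (n + m) (x + y)) (-1) 1.

(* The polynomial y^m * 4F3(-m/2,(1-m)/2,(1-m)/2,(2-m)/2; 1-m, 1/2-m-n, n+3/2; 4/y^2).
   The series terminates: for k > floor(m/2) one of the upper Pochhammer symbols
   (-m/2)_k (m even) or ((1-m)/2)_k (m odd) vanishes, so only k = 0..floor(m/2)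
   contribute, and y^m (4/y^2)^k = 4^k y^(m-2k). *)
Definition hyp_poly (m n : nat) (y : R) : R :=
  sum_f_R0 (fun k =>
     hyp43_coef (- INR m / 2) ((1 - INR m) / 2) ((1 - INR m) / 2) ((2 - INR m) / 2)
                (1 - INR m) (/ 2 - INR m - INR n) (INR n + 3 / 2) k
     * 4 ^ k * y ^ (m - 2 * k)) (Nat.div2 m).

(* Differentiating under the integral sign gives
   R'_{m,n}(y) = int_{-1}^1 P_n(x) P'_{n+m}(x+y) dx, and the identity
   P'_{k+2} - P'_k = (2k+3) P_{k+1} turns this into the recurrence
   R'_{m+2,n} = R'_{m,n} + (2n+2m+3) R_{m+1,n}.  Orthogonality of P_n to polynomials of
   lower degree supplies the initial data R_{0,n} = 2/(2n+1), R_{1,n}(y) = 2y and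
   R_{m,n}(0) = 0 for m >= 1, which determine the whole family.  The right-hand side
   satisfies the same recurrence and initial data: with Gamma(k+1) = k!,
   Gamma(k+1/2) = (1/2)_k Gamma(1/2) and the duplication and reflection formulas for
   Pochhammer symbols, its coefficient of y^(r+1) for m = 2k+1+r is
   2^(r+1) (n+k+3/2)_r binom(k+r,k) / (r+1)!, and the recurrence becomes a two-term
   identity between these coefficients. *)

From Stdlib Require Import Reals Lra Lia Classical Factorial.
From Coquelicot Require Import Coquelicot.
Open Scope R_scope.

Lemma nat_ind2 (P : nat -> Prop) :
  P 0%nat -> P 1%nat -> (forall n, P n -> P (S n) -> P (S (S n))) -> forall n, P n.
Proof. intros H0 H1 HS. apply Nat.pair_induction; auto. intros ? ? ->; reflexivity. Qed.

Lemma RInt_lincomb (f g : R -> R) a b c d :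
  ex_RInt f a b -> ex_RInt g a b ->
  RInt (fun x => c * f x + d * g x) a b = c * RInt f a b + d * RInt g a b.
Proof.
  intros Hf Hg.
  rewrite (RInt_plus (fun x => c * f x) (fun x => d * g x)),
    (RInt_scal f), (RInt_scal g); auto; [apply (ex_RInt_scal f) | apply (ex_RInt_scal g)]; auto.
Qed.

(** * Legendre polynomials *)

Lemma legendreP_SS n x : legendreP (S (S n)) x =
  ((2 * INR n + 3) * x * legendreP (S n) x - (INR n + 1) * legendreP n x) / (INR n + 2).
Proof.
  unfold legendreP. simpl legendre_pair.
  destruct (legendre_pair n x) as [p q]. reflexivity.
Qed.

Lemma legendreP_three_term n x : x * legendreP (S n) x =
  ((INR n + 2) * legendreP (S (S n)) x + (INR n + 1) * legendreP n x) / (2 * INR n + 3).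
Proof. rewrite legendreP_SS. pose proof (pos_INR n). field. lra. Qed.

Lemma legendreP_ends n : legendreP n 1 = 1 /\ legendreP n (-1) = (-1) ^ n.
Proof.
  induction n as [| |n [A1 A2] [B1 B2]] using nat_ind2;
    try (unfold legendreP; simpl; split; ring).
  rewrite !legendreP_SS, A1, A2, B1, B2. pose proof (pos_INR n).
  split; simpl; field; lra.
Qed.

Fixpoint legendreD (n : nat) (x : R) : R :=
  match n with
  | O => 0
  | S O => 1
  | S (S j) => (2 * INR j + 3) * legendreP (S j) x + legendreD j x
  end.

Lemma legendreD_SS n x :
  legendreD (S (S n)) x = (2 * INR n + 3) * legendreP (S n) x + legendreD n x.
Proof. reflexivity. Qed.

Lemma legendreD_identities n x :
  x * legendreD (S n) x - legendreD n x = (INR n + 1) * legendreP (S n) x /\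
  x * legendreD n x - legendreD (S n) x = - (INR n + 1) * legendreP n x.
Proof.
  induction n as [|n [IHB IHC]].
  - unfold legendreP; simpl. split; ring.
  - rewrite legendreD_SS, S_INR, legendreP_SS. pose proof (pos_INR n). split.
    + replace (x * ((2 * INR n + 3) * legendreP (S n) x + legendreD n x) - legendreD (S n) x)
        with ((2 * INR n + 3) * x * legendreP (S n) x + (x * legendreD n x - legendreD (S n) x))
        by ring.
      rewrite IHC. field. lra.
    + lra.
Qed.

Lemma is_derive_legendreP n x : is_derive (legendreP n) x (legendreD n x).
Proof.
  revert x.
  induction n as [| |n IH1 IH2] using nat_ind2; intro x.
  - apply (is_derive_ext (fun _ => 1)); [reflexivity|]. auto_derive; auto.
  - apply (is_derive_ext (fun t => t)); [reflexivity|]. auto_derive; auto.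
  - apply (is_derive_ext (fun t => ((2 * INR n + 3) * t * legendreP (S n) t
                                    - (INR n + 1) * legendreP n t) / (INR n + 2))).
    { intro t. symmetry. apply legendreP_SS. }
    auto_derive.
    + repeat split; eexists; eauto.
    + replace (Derive (fun t => legendreP n t) x) with (legendreD n x)
        by (symmetry; apply is_derive_unique, IH1).
      replace (Derive (fun t => legendreP (S n) t) x) with (legendreD (S n) x)
        by (symmetry; apply is_derive_unique, IH2).
      destruct (legendreD_identities n x) as [HB _].
      rewrite legendreD_SS. pose proof (pos_INR n).
      replace ((2 * INR n + 3) * x * (1 * legendreD (S n) x))
        with ((2 * INR n + 3) * (x * legendreD (S n) x)) by ring.
      replace (x * legendreD (S n) x)
        with (legendreD n x + (INR n + 1) * legendreP (S n) x) by lra.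
      field. lra.
Qed.

Lemma Derive_legendreP n x : Derive (fun t => legendreP n t) x = legendreD n x.
Proof. apply is_derive_unique, is_derive_legendreP. Qed.

Lemma continuous_legendreP n x : continuous (legendreP n) x.
Proof.
  apply (@ex_derive_continuous R_AbsRing R_NormedModule).
  eexists. apply is_derive_legendreP.
Qed.

Lemma RInt_legendreP_0 n : (1 <= n)%nat -> RInt (legendreP n) (-1) 1 = 0.
Proof.
  intros Hn. destruct n as [|j]; [lia|]. pose proof (pos_INR j).
  set (F t := (legendreP (S (S j)) t - legendreP j t) / (2 * INR j + 3)).
  assert (HF : forall x, is_derive F x (legendreP (S j) x)).
  { intro x. unfold F. auto_derive.
    - repeat split; eexists; apply is_derive_legendreP.
    - rewrite !Derive_legendreP, legendreD_SS. field. lra. }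
  rewrite (is_RInt_unique _ _ _ _ (is_RInt_derive F (legendreP (S j)) (-1) 1
             (fun x _ => HF x) (fun x _ => continuous_legendreP (S j) x))).
  destruct (legendreP_ends (S (S j))) as [A1 A2], (legendreP_ends j) as [B1 B2].
  unfold F, minus, plus, opp; simpl. rewrite A1, A2, B1, B2. simpl. field. lra.
Qed.

Inductive poly_deg_lt : nat -> (R -> R) -> Prop :=
  | poly_deg_lt_zero d : poly_deg_lt d (fun _ => 0)
  | poly_deg_lt_const d c : poly_deg_lt (S d) (fun _ => c)
  | poly_deg_lt_mulx d f : poly_deg_lt d f -> poly_deg_lt (S d) (fun x => x * f x)
  | poly_deg_lt_add d f g :
      poly_deg_lt d f -> poly_deg_lt d g -> poly_deg_lt d (fun x => f x + g x)
  | poly_deg_lt_scal d c f : poly_deg_lt d f -> poly_deg_lt d (fun x => c * f x)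
  | poly_deg_lt_ext d f g : poly_deg_lt d f -> (forall x, f x = g x) -> poly_deg_lt d g
  | poly_deg_lt_S d f : poly_deg_lt d f -> poly_deg_lt (S d) f.

Lemma poly_deg_lt_le d d' f : (d <= d')%nat -> poly_deg_lt d f -> poly_deg_lt d' f.
Proof. induction 1; auto using poly_deg_lt_S. Qed.

Lemma poly_deg_lt_continuous d f : poly_deg_lt d f -> forall x, continuous f x.
Proof.
  induction 1; intro x.
  - apply continuous_const.
  - apply continuous_const.
  - apply (continuous_mult (fun t => t) f); auto using continuous_id.
  - apply (continuous_plus f g); auto.
  - apply (continuous_mult (fun _ => c) f); auto using continuous_const.
  - apply (continuous_ext f); auto.
  - auto.
Qed.

Lemma poly_deg_lt_shift d f y : poly_deg_lt d f -> poly_deg_lt d (fun x => f (x + y)).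
Proof.
  induction 1; try (constructor; auto; fail).
  - apply poly_deg_lt_ext with (fun x => x * f (x + y) + y * f (x + y)).
    + apply poly_deg_lt_add; [apply poly_deg_lt_mulx | apply poly_deg_lt_S, poly_deg_lt_scal]; auto.
    + intro; ring.
  - apply poly_deg_lt_ext with (fun x => f (x + y)); auto.
Qed.

Lemma poly_deg_lt_legendreP n : poly_deg_lt (S n) (legendreP n).
Proof.
  induction n as [| |n IH1 IH2] using nat_ind2.
  - apply poly_deg_lt_ext with (fun _ => 1); [apply poly_deg_lt_const | reflexivity].
  - apply poly_deg_lt_ext with (fun x => x * 1); [apply poly_deg_lt_mulx, poly_deg_lt_const|].
    intro x. unfold legendreP; simpl. ring.
  - apply poly_deg_lt_ext with (fun x => (2 * INR n + 3) / (INR n + 2) * (x * legendreP (S n) x)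
                                   + (- (INR n + 1) / (INR n + 2)) * legendreP n x).
    + apply poly_deg_lt_add; apply poly_deg_lt_scal;
        [apply poly_deg_lt_mulx | apply (poly_deg_lt_le (S n))]; auto.
    + intro x. rewrite legendreP_SS. pose proof (pos_INR n). field. lra.
Qed.

Lemma poly_deg_lt_legendreD n : poly_deg_lt n (legendreD n).
Proof.
  induction n as [| |n IH1 IH2] using nat_ind2.
  - apply poly_deg_lt_ext with (fun _ => 0); [apply poly_deg_lt_zero | reflexivity].
  - apply poly_deg_lt_ext with (fun _ => 1); [apply poly_deg_lt_const | reflexivity].
  - apply poly_deg_lt_ext with (fun x => (2 * INR n + 3) * legendreP (S n) x + legendreD n x).
    + apply poly_deg_lt_add; [apply poly_deg_lt_scal, poly_deg_lt_legendreP|].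
      apply (poly_deg_lt_le n); auto.
    + intro x. symmetry. apply legendreD_SS.
Qed.

Lemma continuous_legendreD n x : continuous (legendreD n) x.
Proof. apply (poly_deg_lt_continuous n), poly_deg_lt_legendreD. Qed.

Ltac continuity_R := repeat
  match goal with
  | |- continuous (fun t => @?f t + @?g t) _ => apply (continuous_plus f g)
  | |- continuous (fun t => @?f t * @?g t) _ => apply (continuous_mult f g)
  | |- continuous (fun _ => _) _ => apply continuous_const
  | |- continuous (fun t => t) _ => apply continuous_id
  | |- continuous (fun t => ?P ?k (t + ?y)) _ => apply (continuous_comp (fun t => t + y) (P k))
  | |- continuous (fun t => legendreP ?k t) _ => apply (continuous_legendreP k)
  | |- continuous (fun t => legendreD ?k t) _ => apply (continuous_legendreD k)
  | |- continuous (legendreP ?k) _ => apply (continuous_legendreP k)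
  | |- continuous (legendreD ?k) _ => apply (continuous_legendreD k)
  | H : forall x, continuous ?h x |- continuous (fun t => ?h t) _ => apply H
  end.

Ltac ex_RInt_by_continuity :=
  apply (@ex_RInt_continuous R_CompleteNormedModule); intros; continuity_R; auto.

Lemma legendreP_orthogonal d f n : poly_deg_lt d f -> (d <= n)%nat ->
  RInt (fun x => legendreP n x * f x) (-1) 1 = 0.
Proof.
  intro H. revert n.
  induction H as [d|d c|d f Hf IH|d f g Hf IHf Hg IHg|d c f Hf IH|d f g Hf IH Hfg|d f Hf IH];
    intros n Hn.
  - rewrite (RInt_ext _ (fun _ => 0)) by (intros; simpl; ring).
    rewrite RInt_const. apply Rmult_0_r.
  - rewrite (RInt_ext _ (fun x => c * legendreP n x)) by (intros; simpl; ring).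
    rewrite (RInt_scal (legendreP n)), RInt_legendreP_0 by (lia || ex_RInt_by_continuity).
    apply Rmult_0_r.
  - destruct n as [|k]; [lia|]. pose proof (pos_INR k).
    assert (Hc := poly_deg_lt_continuous d f Hf).
    rewrite (RInt_ext _ (fun x => (INR k + 2) / (2 * INR k + 3) * (legendreP (S (S k)) x * f x)
                                + (INR k + 1) / (2 * INR k + 3) * (legendreP k x * f x))).
    2:{ intros x _. simpl.
        replace (legendreP (S k) x * (x * f x)) with (x * legendreP (S k) x * f x) by ring.
        rewrite legendreP_three_term. field. lra. }
    rewrite RInt_lincomb, !IH by (lia || ex_RInt_by_continuity). simpl; ring.
  - assert (Hcf := poly_deg_lt_continuous d f Hf).
    assert (Hcg := poly_deg_lt_continuous d g Hg).
    rewrite (RInt_ext _ (fun x => legendreP n x * f x + legendreP n x * g x))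
      by (intros; simpl; ring).
    rewrite (RInt_plus (fun x => legendreP n x * f x)), IHf, IHg
      by (lia || ex_RInt_by_continuity).
    apply Rplus_0_r.
  - assert (Hc := poly_deg_lt_continuous d f Hf).
    rewrite (RInt_ext _ (fun x => c * (legendreP n x * f x))) by (intros; simpl; ring).
    rewrite (RInt_scal (fun x => legendreP n x * f x)), IH by (lia || ex_RInt_by_continuity).
    apply Rmult_0_r.
  - rewrite <- (IH n Hn). apply RInt_ext. intros x _. rewrite Hfg. reflexivity.
  - apply IH. lia.
Qed.

Lemma legendreP_orthogonal_legendreP a b : (a < b)%nat ->
  RInt (fun x => legendreP b x * legendreP a x) (-1) 1 = 0.
Proof. intro. apply (legendreP_orthogonal (S a)); [apply poly_deg_lt_legendreP | lia]. Qed.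

Lemma legendreP_S_lead n : exists q, poly_deg_lt n q /\ forall x,
  legendreP (S n) x = (2 * INR n + 1) / (INR n + 1) * (x * legendreP n x) + q x.
Proof.
  destruct n as [|j].
  - exists (fun _ => 0). split; [apply poly_deg_lt_zero|].
    intro x. unfold legendreP; simpl. field.
  - exists (fun x => - (INR j + 1) / (INR j + 2) * legendreP j x). split.
    + apply poly_deg_lt_scal, poly_deg_lt_legendreP.
    + intro x. rewrite legendreP_SS, S_INR. pose proof (pos_INR j). field. lra.
Qed.

Lemma RInt_legendreP_sqr n :
  RInt (fun x => legendreP n x * legendreP n x) (-1) 1 = 2 / (2 * INR n + 1).
Proof.
  induction n as [|n IH].
  - rewrite (RInt_ext _ (fun _ => 1)) by (intros; unfold legendreP; simpl; ring).
    rewrite RInt_const. cbn. field.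
  - destruct (legendreP_S_lead n) as [q [Hq Hlead]].
    assert (Hcq := poly_deg_lt_continuous n q Hq). pose proof (pos_INR n).
    assert (Hx : RInt (fun x => legendreP (S n) x * (x * legendreP n x)) (-1) 1
                 = (INR n + 1) / (2 * INR n + 3) * (2 / (2 * INR n + 1))).
    { rewrite (RInt_ext _ (fun x => (INR n + 1) / (2 * INR n + 3) * (legendreP n x * legendreP n x)
                          + (INR n + 2) / (2 * INR n + 3) * (legendreP (S (S n)) x * legendreP n x))).
      2:{ intros x _. simpl.
          replace (legendreP (S n) x * (x * legendreP n x))
            with (x * legendreP (S n) x * legendreP n x) by ring.
          rewrite legendreP_three_term. field. lra. }
      rewrite RInt_lincomb, IH, legendreP_orthogonal_legendreP by (lia || ex_RInt_by_continuity).
      simpl; ring. }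
    rewrite (RInt_ext _ (fun x => (2 * INR n + 1) / (INR n + 1) * (legendreP (S n) x * (x * legendreP n x))
                                  + 1 * (legendreP (S n) x * q x))).
    2:{ intros x _. simpl. rewrite Hlead at 2. ring. }
    rewrite RInt_lincomb, Hx, (legendreP_orthogonal n q) by (auto || ex_RInt_by_continuity).
    rewrite S_INR. simpl. field. lra.
Qed.

(** * The integral R_{m,n} *)

Lemma derive_zero_const (h : R -> R) : (forall y, is_derive h y 0) -> forall y, h y = h 0.
Proof.
  intros Hd y.
  assert (H := is_RInt_derive h (fun _ => 0) 0 y (fun x _ => Hd x)
                 (fun x _ => continuous_const 0 x)).
  apply is_RInt_unique in H. rewrite RInt_const in H.
  unfold scal, minus, plus, opp in H; simpl in H. unfold mult in H; simpl in H. lra.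
Qed.

Definition dRmn (m n : nat) (y : R) : R :=
  RInt (fun x => legendreP n x * legendreD (n + m) (x + y)) (-1) 1.

Lemma is_derive_shifted_product n N v u :
  is_derive (fun z => legendreP n v * legendreP N (v + z)) u (legendreP n v * legendreD N (v + u)).
Proof.
  auto_derive.
  - eexists; apply is_derive_legendreP.
  - rewrite Derive_legendreP. ring.
Qed.

Lemma is_derive_Rmn m n y : is_derive (Rmn m n) y (dRmn m n y).
Proof.
  unfold Rmn, dRmn. set (N := (n + m)%nat).
  assert (H := is_derive_RInt_param (fun u t => legendreP n t * legendreP N (t + u)) (-1) 1 y).
  rewrite (RInt_ext (fun t => Derive (fun u => legendreP n t * legendreP N (t + u)) y)
                    (fun x => legendreP n x * legendreD N (x + y))) in H.
  2:{ intros x _. apply is_derive_unique, is_derive_shifted_product. }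
  apply H.
  - apply filter_forall. intros x0 t _. eexists. apply is_derive_shifted_product.
  - intros t _.
    apply continuity_2d_pt_ext with (fun u v => legendreP n v * legendreD N (v + u)).
    { intros u v. symmetry. apply is_derive_unique, is_derive_shifted_product. }
    apply continuity_2d_pt_mult.
    + apply (continuity_1d_2d_pt_comp (legendreP n) (fun u v => v)).
      * apply continuity_pt_filterlim, continuous_legendreP.
      * apply continuity_2d_pt_id2.
    + apply (continuity_1d_2d_pt_comp (legendreD N) (fun u v => v + u)).
      * apply continuity_pt_filterlim, continuous_legendreD.
      * apply continuity_2d_pt_plus; [apply continuity_2d_pt_id2 | apply continuity_2d_pt_id1].
  - apply filter_forall. intro u. ex_RInt_by_continuity.
Qed.

Lemma dRmn_SS j n y : dRmn (S (S j)) n y = dRmn j n y + (2 * INR (n + S j) + 1) * Rmn (S j) n y.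
Proof.
  unfold dRmn, Rmn.
  rewrite (RInt_ext _ (fun x => 1 * (legendreP n x * legendreD (n + j) (x + y))
         + (2 * INR (n + S j) + 1) * (legendreP n x * legendreP (n + S j) (x + y)))).
  2:{ intros x _. replace (n + S (S j))%nat with (S (S (n + j))) by lia.
      replace (n + S j)%nat with (S (n + j)) by lia. rewrite legendreD_SS, S_INR. simpl; ring. }
  rewrite RInt_lincomb by ex_RInt_by_continuity. simpl; ring.
Qed.

Lemma RInt_legendreP_shifted_legendreD n k y : (k <= n)%nat ->
  RInt (fun x => legendreP n x * legendreD k (x + y)) (-1) 1 = 0.
Proof.
  intro. apply (legendreP_orthogonal k); [|lia].
  apply poly_deg_lt_shift, poly_deg_lt_legendreD.
Qed.

Lemma Rmn_S_0 j n : Rmn (S j) n 0 = 0.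
Proof.
  unfold Rmn. rewrite (RInt_ext _ (fun x => legendreP (n + S j) x * legendreP n x)).
  - apply legendreP_orthogonal_legendreP. lia.
  - intros x _. rewrite Rplus_0_r. simpl; ring.
Qed.

Lemma Rmn_0 n y : Rmn 0 n y = 2 / (2 * INR n + 1).
Proof.
  assert (Hd : forall y, is_derive (Rmn 0 n) y 0).
  { intro y0. rewrite <- (RInt_legendreP_shifted_legendreD n (n + 0) y0) by lia.
    apply is_derive_Rmn. }
  rewrite (derive_zero_const _ Hd y), <- RInt_legendreP_sqr.
  unfold Rmn. apply RInt_ext. intros x _. rewrite Nat.add_0_r, Rplus_0_r. reflexivity.
Qed.

Lemma Rmn_1 n y : Rmn 1 n y = 2 * y.
Proof.
  pose proof (pos_INR n).
  assert (Hd1 : forall y, dRmn 1 n y = 2).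
  { intro y0. unfold dRmn.
    rewrite (RInt_ext _ (fun x => (2 * INR n + 1) * (legendreP n x * legendreP (n + 0) (x + y0))
                                  + 1 * (legendreP n x * legendreD (pred n) (x + y0)))).
    2:{ intros x _. replace (n + 1)%nat with (S n) by lia. rewrite Nat.add_0_r.
        destruct n as [|k]; [unfold legendreP; simpl; ring|].
        rewrite legendreD_SS, S_INR. simpl; ring. }
    rewrite RInt_lincomb by ex_RInt_by_continuity.
    change (RInt (fun x => legendreP n x * legendreP (n + 0) (x + y0)) (-1) 1) with (Rmn 0 n y0).
    rewrite Rmn_0, RInt_legendreP_shifted_legendreD by lia. simpl. field. lra. }
  assert (Hd : forall y, is_derive (fun y => Rmn 1 n y - 2 * y) y 0).
  { intro y0. replace 0 with (dRmn 1 n y0 - 2 * 1) by (rewrite Hd1; ring).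
    apply (is_derive_minus (Rmn 1 n) (fun y => 2 * y)); [apply is_derive_Rmn|].
    auto_derive; auto. }
  assert (E := derive_zero_const _ Hd y). simpl in E. rewrite Rmn_S_0 in E. lra.
Qed.

Lemma Rmn_unique n (Q dQ : nat -> R -> R) :
  (forall m y, is_derive (Q m) y (dQ m y)) ->
  (forall y, Q 0%nat y = 2 / (2 * INR n + 1)) ->
  (forall y, Q 1%nat y = 2 * y) ->
  (forall j y, dQ (S (S j)) y = dQ j y + (2 * INR (n + S j) + 1) * Q (S j) y) ->
  (forall j, Q (S (S j)) 0 = 0) ->
  forall m y, Rmn m n y = Q m y.
Proof.
  intros HdQ HQ0 HQ1 HdQ_SS HQ_0 m.
  induction m as [| |j IH1 IH2] using nat_ind2; intro y.
  - rewrite Rmn_0, HQ0. reflexivity.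
  - rewrite Rmn_1, HQ1. reflexivity.
  - assert (Hdj : forall y, dRmn j n y = dQ j y).
    { intro y0. rewrite <- (is_derive_unique _ _ _ (HdQ j y0)). symmetry.
      apply is_derive_unique, (is_derive_ext (Rmn j n)); [apply IH1 | apply is_derive_Rmn]. }
    assert (Hd : forall y, is_derive (fun y => Rmn (S (S j)) n y - Q (S (S j)) y) y 0).
    { intro y0. replace 0 with (dRmn (S (S j)) n y0 - dQ (S (S j)) y0)
        by (rewrite dRmn_SS, HdQ_SS, Hdj, IH2; ring).
      apply (is_derive_minus (Rmn (S (S j)) n)); [apply is_derive_Rmn | apply HdQ]. }
    assert (E := derive_zero_const _ Hd y). simpl in E. rewrite Rmn_S_0, HQ_0 in E. lra.
Qed.

(** * The Gamma function *)

Lemma lim_Rpower_exp_infty s : is_lim (fun t => Rpower t s * exp (- t)) p_infty 0.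
Proof.
  assert (Hr : is_lim (fun t => s * (ln t / t) - 1) p_infty (-1)).
  { replace (-1) with (s * 0 - 1) by ring.
    apply (is_lim_minus _ _ _ (s * 0) 1); [|apply is_lim_const|reflexivity].
    apply (is_lim_scal_l _ s _ 0), is_lim_div_ln_p. }
  assert (Hm : is_lim (fun t => t * (s * (ln t / t) - 1)) p_infty (Rbar_mult p_infty (-1)))
    by (apply is_lim_mult; [apply is_lim_id | exact Hr | simpl; lra]).
  assert (E : Rbar_mult p_infty (-1) = m_infty)
    by (unfold Rbar_mult, Rbar_mult'; destruct (Rle_dec 0 (-1)); [exfalso; lra | reflexivity]).
  rewrite E in Hm.
  apply (is_lim_ext_loc (fun t => exp (t * (s * (ln t / t) - 1)))).
  { exists 0. intros t Ht. unfold Rpower. rewrite <- exp_plus. f_equal. field. lra. }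
  apply (is_lim_comp exp _ p_infty 0 m_infty); [apply is_lim_exp_m | exact Hm |].
  exists 0. intros. discriminate.
Qed.

Lemma lim_Rpower_exp_0 s : 0 < s ->
  filterlim (fun t => Rpower t s * exp (- t)) (at_right 0) (locally 0).
Proof.
  intro Hs.
  apply (filterlim_ext (fun t => exp (s * ln t - t))).
  { intro t. unfold Rpower. rewrite <- exp_plus. reflexivity. }
  apply (filterlim_comp _ _ _ (fun t => s * ln t - t) exp _ (Rbar_locally m_infty));
    [|exact is_lim_exp_m].
  intros P [M HM]. unfold filtermap.
  assert (Hln : at_right 0 (fun t => ln t < M / s))
    by (apply (is_lim_ln_0 (fun u => u < M / s)); exists (M / s); auto).
  assert (Hpos : at_right 0 (fun t => 0 < t))
    by (exists (mkposreal 1 Rlt_0_1); intros y _ Hy; exact Hy).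
  generalize (filter_and _ _ Hln Hpos). apply filter_imp. intros t [Ht1 Ht2].
  apply HM. apply Rmult_lt_compat_l with (r := s) in Ht1; auto.
  replace (s * (M / s)) with M in Ht1 by (field; lra). lra.
Qed.

Lemma locally_pos x : 0 < x -> locally x (fun t => 0 < t).
Proof.
  intro H. exists (mkposreal x H). intros y Hy.
  change (Rabs (y + - x) < x) in Hy. apply Rabs_def2 in Hy. simpl in Hy. lra.
Qed.

Lemma is_RInt_gen_0_infty_derive (F f : R -> R) (la lb : R) :
  (forall x, 0 < x -> is_derive F x (f x)) -> (forall x, 0 < x -> continuous f x) ->
  filterlim F (at_right 0) (locally la) -> is_lim F p_infty lb ->
  is_RInt_gen f (at_right 0) (Rbar_locally p_infty) (lb - la).
Proof.
  intros Hd Hc H0 Hinf.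
  assert (Hpos : filter_prod (at_right 0) (Rbar_locally p_infty)
                   (fun ab => forall x, Rmin (fst ab) (snd ab) <= x <= Rmax (fst ab) (snd ab) -> 0 < x)).
  { apply Filter_prod with (fun a => 0 < a) (fun b => 0 < b).
    - exists (mkposreal 1 Rlt_0_1). intros y _ Hy. exact Hy.
    - exists 0. auto.
    - intros a b Ha Hb x Hx. simpl in *.
      assert (0 < Rmin a b) by (apply Rmin_glb_lt; auto). lra. }
  apply is_RInt_gen_ext with (Derive F).
  - eapply filter_imp; [|exact Hpos]. intros [a b] Hab x Hx.
    apply is_derive_unique, Hd, Hab. simpl in *; lra.
  - apply is_RInt_gen_Derive; [| |exact H0|exact Hinf];
      eapply filter_imp; try exact Hpos; intros [a b] Hab x Hx; specialize (Hab x Hx).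
    + exists (f x). apply Hd, Hab.
    + apply continuous_ext_loc with f; [|apply Hc, Hab].
      eapply filter_imp; [|apply (locally_pos x Hab)]. intros y Hy.
      symmetry. apply is_derive_unique, Hd, Hy.
Qed.

Definition is_Gamma (s l : R) : Prop :=
  is_RInt_gen (fun t => Rpower t (s - 1) * exp (- t)) (at_right 0) (Rbar_locally p_infty) l.

Lemma Gamma_unique s l : is_Gamma s l -> Gamma s = l.
Proof. intro H. exact (is_RInt_gen_unique _ l H). Qed.

Lemma is_derive_Rpower a x : 0 < x -> is_derive (fun t => Rpower t a) x (a * Rpower x (a - 1)).
Proof. intro H. apply is_derive_Reals, derivable_pt_lim_power, H. Qed.

Lemma is_derive_exp_opp x : is_derive (fun t => exp (- t)) x (- exp (- x)).
Proof. auto_derive; auto. ring. Qed.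

Lemma continuous_gamma_integrand s x : 0 < x ->
  continuous (fun t => Rpower t (s - 1) * exp (- t)) x.
Proof.
  intro H. apply (@ex_derive_continuous R_AbsRing R_NormedModule).
  apply (ex_derive_mult (fun t => Rpower t (s - 1)) (fun t => exp (- t)));
    eexists; [apply is_derive_Rpower, H | apply is_derive_exp_opp].
Qed.

Lemma is_Gamma_S s l : 0 < s -> is_Gamma s l -> is_Gamma (s + 1) (s * l).
Proof.
  intros Hs Hl.
  assert (Hparts : is_RInt_gen (fun t => s * (Rpower t (s - 1) * exp (- t))
                                        - Rpower t (s + 1 - 1) * exp (- t))
                     (at_right 0) (Rbar_locally p_infty) (0 - 0)).
  { apply (is_RInt_gen_0_infty_derive (fun t => Rpower t s * exp (- t))
             (fun t => s * (Rpower t (s - 1) * exp (- t)) - Rpower t (s + 1 - 1) * exp (- t))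
             0 0).
    - intros x Hx. replace (s + 1 - 1) with s by ring.
      evar (d : R).
      replace (s * (Rpower x (s - 1) * exp (- x)) - Rpower x s * exp (- x)) with d.
      + apply (is_derive_mult (fun t => Rpower t s) (fun t => exp (- t)));
          [apply is_derive_Rpower, Hx | apply is_derive_exp_opp | intros; apply Rmult_comm].
      + unfold d. simpl. unfold plus, mult; simpl. ring.
    - intros x Hx.
      apply (continuous_minus (fun t => s * (Rpower t (s - 1) * exp (- t)))
                              (fun t => Rpower t (s + 1 - 1) * exp (- t)));
        [apply (continuous_mult (fun _ => s)); [apply continuous_const|] |];
        apply continuous_gamma_integrand, Hx.
    - apply lim_Rpower_exp_0, Hs.
    - apply lim_Rpower_exp_infty. }
  replace (s * l) with (minus (scal s l) (0 - 0))
    by (unfold minus, plus, opp, scal; simpl; unfold mult; simpl; ring).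
  eapply is_RInt_gen_ext; [|exact (is_RInt_gen_minus _ _ _ _ (is_RInt_gen_scal _ s l Hl) Hparts)].
  apply filter_forall. intros [a b] x _. simpl.
  unfold minus, plus, opp, scal; simpl. unfold mult; simpl. ring.
Qed.

Lemma is_Gamma_1 : is_Gamma 1 1.
Proof.
  assert (Rpower_0 : forall t, Rpower t 0 = 1)
    by (intro t; unfold Rpower; rewrite Rmult_0_l; apply exp_0).
  enough (H : is_Gamma 1 (0 - -1)) by (replace (0 - -1) with 1 in H by ring; exact H).
  apply (is_RInt_gen_0_infty_derive (fun t => - (Rpower t 0 * exp (- t)))
           (fun t => Rpower t (1 - 1) * exp (- t)) (-1) 0).
  - intros x _. replace (1 - 1) with 0 by ring.
    apply (is_derive_ext (fun t => - exp (- t))); [intro t; rewrite Rpower_0; simpl; ring|].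
    auto_derive; auto. rewrite Rpower_0. ring.
  - intros x Hx. apply continuous_gamma_integrand, Hx.
  - apply (filterlim_ext (fun t => - exp (- t))); [intro t; rewrite Rpower_0; simpl; ring|].
    replace (-1) with (- exp (- 0)) by (rewrite Ropp_0, exp_0; ring).
    apply (filterlim_filter_le_1 (F := locally 0)).
    + intros P [e He]. exists e. intros y Hy _. apply He, Hy.
    + apply (@ex_derive_continuous R_AbsRing R_NormedModule (fun t => - exp (- t))).
      auto_derive; auto.
  - replace (Finite 0) with (Rbar_opp 0) by (simpl; f_equal; ring).
    apply is_lim_opp, lim_Rpower_exp_infty.
Qed.

Lemma nondecreasing_bounded_lim (F : R -> R) c B :
  (forall a b, c <= a -> a <= b -> F a <= F b) -> (forall a, c <= a -> F a <= B) ->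
  exists L : R, is_lim F p_infty L /\ forall a, c <= a -> F a <= L.
Proof.
  intros Hm Hb.
  set (E y := exists a, c <= a /\ y = F a).
  assert (HE : bound E) by (exists B; intros y [a [Ha ->]]; auto).
  assert (HE' : exists y, E y) by (exists (F c), c; split; [lra | auto]).
  destruct (completeness E HE HE') as [L [Hub Hlub]].
  exists L. split.
  - apply filterlim_locally. intro eps.
    assert (Ha0 : exists a0, c <= a0 /\ L - eps < F a0).
    { apply NNPP. intro Hn.
      assert (L <= L - eps).
      { apply Hlub. intros y [a [Ha ->]].
        apply Rnot_lt_le. intro Hlt. apply Hn. exists a; auto. }
      destruct eps; simpl in *; lra. }
    destruct Ha0 as [a0 [Hc0 Ha0]].
    exists (Rmax c a0). intros x Hx.
    assert (c <= x) by (apply Rle_trans with (Rmax c a0); [apply Rmax_l | lra]).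
    assert (a0 <= x) by (apply Rle_trans with (Rmax c a0); [apply Rmax_r | lra]).
    assert (F a0 <= F x) by (apply Hm; auto).
    assert (F x <= L) by (apply Hub; exists x; auto).
    change (Rabs (F x - L) < eps). apply Rabs_def1; lra.
  - intros a Ha. apply Hub. exists a; auto.
Qed.

Lemma nondecreasing_bounded_lim_0 (F : R -> R) B :
  (forall a b, 0 < a -> a <= b -> F a <= F b) -> (forall a, 0 < a -> a <= 1 -> - B <= F a) ->
  exists L, filterlim F (at_right 0) (locally L) /\ forall a, 0 < a -> a <= 1 -> L <= F a.
Proof.
  intros Hm Hb.
  destruct (nondecreasing_bounded_lim (fun u => - F (/ u)) 1 B) as [L [HL HLb]].
  - intros a b Ha Hab. apply Ropp_le_contravar, Hm; [apply Rinv_0_lt_compat; lra|].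
    apply Rinv_le_contravar; lra.
  - intros a Ha.
    assert (Ha' : 0 < / a <= 1)
      by (split; [apply Rinv_0_lt_compat | rewrite <- Rinv_1; apply Rinv_le_contravar]; lra).
    assert (Hb' := Hb (/ a) (proj1 Ha') (proj2 Ha')). lra.
  - exists (- L). split.
    + apply (filterlim_ext_loc (fun x => - (- F (/ / x)))).
      { exists (mkposreal 1 Rlt_0_1). intros y _ Hy. rewrite Rinv_inv. ring. }
      apply (filterlim_comp _ _ _ (fun x => - F (/ / x)) Ropp _ (locally L));
        [|apply (filterlim_opp L)].
      apply (filterlim_comp _ _ _ Rinv (fun u => - F (/ u)) _ (Rbar_locally p_infty));
        [apply filterlim_Rinv_0_right | exact HL].
    + intros a Ha Ha1.
      assert (Ha' : 1 <= / a) by (rewrite <- Rinv_1; apply Rinv_le_contravar; lra).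
      assert (E := HLb (/ a) Ha'). rewrite Rinv_inv in E. lra.
Qed.

Lemma exp_le_1 x : x <= 0 -> exp x <= 1.
Proof.
  intro H. rewrite <- exp_0. destruct H as [H | ->]; [left; apply exp_increasing, H | lra].
Qed.

Section Gamma_half.

Let f (t : R) : R := Rpower t (/ 2 - 1) * exp (- t).
Let F (x : R) : R := RInt f 1 x.

Lemma ex_RInt_gamma_half a b : 0 < a -> 0 < b -> ex_RInt f a b.
Proof.
  intros Ha Hb. apply (@ex_RInt_continuous R_CompleteNormedModule). intros z Hz.
  apply continuous_gamma_integrand. assert (0 < Rmin a b) by (apply Rmin_glb_lt; auto). lra.
Qed.

Lemma gamma_half_Chasles a b : 0 < a -> 0 < b -> F b - F a = RInt f a b.
Proof.
  intros Ha Hb. unfold F. rewrite <- (RInt_Chasles f 1 a b) by (apply ex_RInt_gamma_half; lra).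
  simpl. unfold plus; simpl. ring.
Qed.

Lemma gamma_half_nondecreasing a b : 0 < a -> a <= b -> F a <= F b.
Proof.
  intros Ha Hab.
  assert (0 <= RInt f a b).
  { apply RInt_ge_0; [exact Hab | apply ex_RInt_gamma_half; lra |].
    intros x _. left. apply Rmult_lt_0_compat; apply exp_pos. }
  rewrite <- gamma_half_Chasles in H by lra. lra.
Qed.

Lemma gamma_half_le_1 b : 1 <= b -> F b <= 1.
Proof.
  intro Hb.
  assert (E : is_RInt (fun t => exp (- t)) 1 b (exp (- 1) - exp (- b))).
  { replace (exp (- 1) - exp (- b)) with (minus (- exp (- b)) (- exp (- 1)))
      by (unfold minus, plus, opp; simpl; ring).
    apply (is_RInt_derive (fun t => - exp (- t))).
    - intros x _. auto_derive; auto. ring.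
    - intros x _. apply (@ex_derive_continuous R_AbsRing R_NormedModule). auto_derive; auto. }
  apply Rle_trans with (exp (- 1) - exp (- b)).
  - rewrite <- (is_RInt_unique _ _ _ _ E). apply RInt_le; auto.
    + apply ex_RInt_gamma_half; lra.
    + eexists; exact E.
    + intros x Hx. unfold f. rewrite <- (Rmult_1_l (exp (- x))) at 2.
      apply Rmult_le_compat_r; [left; apply exp_pos|].
      apply exp_le_1. assert (0 <= ln x) by (rewrite <- ln_1; apply ln_le; lra). nra.
  - pose proof (exp_pos (- b)). assert (exp (- 1) <= 1) by (apply exp_le_1; lra). lra.
Qed.

Lemma gamma_half_ge_m2 a : 0 < a -> a <= 1 -> - 2 <= F a.
Proof.
  intros Ha Ha1.
  assert (E : is_RInt (fun t => Rpower t (/ 2 - 1)) a 1 (2 - 2 * Rpower a (/ 2))).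
  { replace (2 - 2 * Rpower a (/ 2)) with (minus (2 * Rpower 1 (/ 2)) (2 * Rpower a (/ 2)))
      by (replace (Rpower 1 (/ 2)) with 1
            by (unfold Rpower; rewrite ln_1, Rmult_0_r; symmetry; apply exp_0);
          unfold minus, plus, opp; simpl; ring).
    apply (is_RInt_derive (fun t => 2 * Rpower t (/ 2))).
    - intros x Hx. rewrite Rmin_left in Hx by lra.
      replace (Rpower x (/ 2 - 1)) with (2 * (/ 2 * Rpower x (/ 2 - 1))) by field.
      apply (is_derive_scal (fun t => Rpower t (/ 2))), is_derive_Rpower. lra.
    - intros x Hx. rewrite Rmin_left in Hx by lra.
      apply (@ex_derive_continuous R_AbsRing R_NormedModule).
      eexists. apply is_derive_Rpower. lra. }
  assert (RInt f a 1 <= 2 - 2 * Rpower a (/ 2)).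
  { rewrite <- (is_RInt_unique _ _ _ _ E). apply RInt_le; auto.
    + apply ex_RInt_gamma_half; lra.
    + eexists; exact E.
    + intros x Hx. unfold f. rewrite <- (Rmult_1_r (Rpower x (/ 2 - 1))) at 2.
      apply Rmult_le_compat_l; [left; apply exp_pos | apply exp_le_1; lra]. }
  assert (0 < Rpower a (/ 2)) by apply exp_pos.
  assert (F 1 = 0) by (unfold F; rewrite RInt_point; reflexivity).
  rewrite <- (gamma_half_Chasles a 1) in H by lra. lra.
Qed.

Lemma is_Gamma_half : exists l, 0 < l /\ is_Gamma (/ 2) l.
Proof.
  destruct (nondecreasing_bounded_lim F 1 1) as [Linf [HLinf HLinf_le]].
  { intros a b Ha Hab. apply gamma_half_nondecreasing; lra. }
  { exact gamma_half_le_1. }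
  destruct (nondecreasing_bounded_lim_0 F 2) as [L0 [HL0 HL0_le]].
  { exact gamma_half_nondecreasing. }
  { exact gamma_half_ge_m2. }
  exists (Linf - L0). split.
  - assert (F 2 <= Linf) by (apply HLinf_le; lra).
    assert (L0 <= F 1) by (apply HL0_le; lra).
    assert (0 < F 2 - F 1).
    { rewrite gamma_half_Chasles by lra. apply RInt_gt_0; [lra | |].
      - intros x _. apply Rmult_lt_0_compat; apply exp_pos.
      - intros x Hx. apply continuous_gamma_integrand. lra. }
    lra.
  - apply (is_RInt_gen_0_infty_derive F f); [| intros x Hx | exact HL0 | exact HLinf];
      [| apply continuous_gamma_integrand, Hx].
    intros x Hx. apply is_derive_RInt with 1; [|apply continuous_gamma_integrand, Hx].
    eapply filter_imp; [|apply (locally_pos x Hx)]. intros y Hy.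
    apply (@RInt_correct R_CompleteNormedModule), ex_RInt_gamma_half; lra.
Qed.

End Gamma_half.

(** * Pochhammer symbols and values of Gamma *)

Lemma poch_S a k : poch a (S k) = poch a k * (a + INR k).
Proof. reflexivity. Qed.

Lemma poch_add a i j : poch a (i + j) = poch a i * poch (a + INR i) j.
Proof.
  induction j as [|j IH].
  - rewrite Nat.add_0_r. simpl. ring.
  - rewrite Nat.add_succ_r, !poch_S, IH, plus_INR. ring.
Qed.

Lemma poch_S_l a k : poch a (S k) = a * poch (a + 1) k.
Proof.
  induction k as [|k IH].
  - simpl. ring.
  - rewrite poch_S, IH, poch_S, S_INR. ring.
Qed.

Lemma poch_duplication a k : poch a k * poch (a + / 2) k * 4 ^ k = poch (2 * a) (2 * k).
Proof.
  induction k as [|k IH].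
  - simpl. ring.
  - replace (2 * S k)%nat with (S (S (2 * k))) by lia.
    rewrite !poch_S, <- IH, !S_INR, mult_INR. simpl. field.
Qed.

Lemma poch_opp a k : poch (- a) k = (-1) ^ k * poch (a - INR k + 1) k.
Proof.
  induction k as [|k IH].
  - simpl. ring.
  - rewrite poch_S, IH, poch_S_l, S_INR.
    replace (a - (INR k + 1) + 1 + 1) with (a - INR k + 1) by ring.
    simpl. ring.
Qed.

Lemma INR_fact_neq_0 k : INR (fact k) <> 0.
Proof. apply not_0_INR, fact_neq_0. Qed.

Lemma poch_nat c j : poch (INR c + 1) j = INR (fact (c + j)) / INR (fact c).
Proof.
  induction j as [|j IH].
  - rewrite Nat.add_0_r. simpl. field. apply INR_fact_neq_0.
  - rewrite poch_S, IH, Nat.add_succ_r, fact_simpl, mult_INR, S_INR, plus_INR.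
    field. apply INR_fact_neq_0.
Qed.

Lemma poch_opp_nat N k : (k <= N)%nat ->
  poch (- INR N) k = (-1) ^ k * INR (fact N) / INR (fact (N - k)).
Proof.
  intro Hk. rewrite poch_opp.
  replace (INR N - INR k + 1) with (INR (N - k) + 1) by (rewrite minus_INR by exact Hk; ring).
  rewrite poch_nat. replace (N - k + k)%nat with N by lia. unfold Rdiv. ring.
Qed.

Lemma poch_pos a k : 0 < a -> 0 < poch a k.
Proof.
  intro H. induction k as [|k IH]; simpl; [lra|].
  apply Rmult_lt_0_compat; auto. pose proof (pos_INR k). lra.
Qed.

Lemma poch_eq_0 a k j : (j < k)%nat -> a + INR j = 0 -> poch a k = 0.
Proof.
  intros Hj Ha. induction k as [|k IH]; [lia|].
  rewrite poch_S. destruct (Nat.eq_dec j k) as [->|Hne].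
  - rewrite Ha. ring.
  - rewrite IH by lia. ring.
Qed.

Lemma poch_neq_0 a k : (forall j, (j < k)%nat -> a + INR j <> 0) -> poch a k <> 0.
Proof.
  induction k as [|k IH]; intro H; simpl; [lra|].
  apply Rmult_integral_contrapositive_currified; auto.
Qed.

Lemma Gamma_nat k : Gamma (INR k + 1) = INR (fact k).
Proof.
  apply Gamma_unique. induction k as [|k IH].
  - replace (INR 0 + 1) with 1 by (simpl; ring). exact is_Gamma_1.
  - rewrite fact_simpl, mult_INR, S_INR.
    apply is_Gamma_S; [pose proof (pos_INR k); lra | exact IH].
Qed.

Lemma Gamma_half_nat : exists l, 0 < l /\ forall k, Gamma (INR k + / 2) = poch (/ 2) k * l.
Proof.
  destruct is_Gamma_half as [l [Hl Hhalf]].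
  exists l. split; [exact Hl|]. intro k. apply Gamma_unique.
  induction k as [|k IH].
  - replace (INR 0 + / 2) with (/ 2) by (simpl; ring). rewrite Rmult_1_l. exact Hhalf.
  - rewrite S_INR, poch_S. replace (INR k + 1 + / 2) with (INR k + / 2 + 1) by ring.
    replace (poch (/ 2) k * (/ 2 + INR k) * l) with ((INR k + / 2) * (poch (/ 2) k * l)) by ring.
    apply is_Gamma_S; [pose proof (pos_INR k); lra | exact IH].
Qed.

Definition Gamma_ratio (m n : nat) : R :=
  Gamma (INR m + INR n + / 2) / (Gamma (INR m + 1) * Gamma (INR n + 3 / 2)).

Lemma Gamma_ratio_0 n : Gamma_ratio 0 n = 2 / (2 * INR n + 1).
Proof.
  destruct Gamma_half_nat as [l [Hl HG]].
  unfold Gamma_ratio. rewrite Gamma_nat.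
  replace (INR 0 + INR n + / 2) with (INR n + / 2) by (simpl; ring).
  replace (INR n + 3 / 2) with (INR (S n) + / 2) by (rewrite S_INR; field).
  rewrite !HG, poch_S.
  assert (0 < poch (/ 2) n) by (apply poch_pos; lra).
  pose proof (pos_INR n). simpl. field. lra.
Qed.

Lemma Gamma_ratio_S m n : Gamma_ratio (S m) n = poch (INR n + 3 / 2) m / INR (fact (S m)).
Proof.
  destruct Gamma_half_nat as [l [Hl HG]].
  unfold Gamma_ratio. rewrite Gamma_nat.
  replace (INR (S m) + INR n + / 2) with (INR (S n + m) + / 2)
    by (rewrite plus_INR, !S_INR; ring).
  replace (INR n + 3 / 2) with (INR (S n) + / 2) by (rewrite S_INR; field).
  rewrite !HG, poch_add.
  replace (/ 2 + INR (S n)) with (INR (S n) + / 2) by ring.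
  assert (0 < poch (/ 2) (S n)) by (apply poch_pos; lra).
  field. repeat split; [apply INR_fact_neq_0 | lra | lra].
Qed.

(** * The hypergeometric side *)

Definition hyp_coef (m n k : nat) : R :=
  hyp43_coef (- INR m / 2) ((1 - INR m) / 2) ((1 - INR m) / 2) ((2 - INR m) / 2)
             (1 - INR m) (/ 2 - INR m - INR n) (INR n + 3 / 2) k.

(* Besides the terms cut off by ((1-m)/2)_k or (-m/2)_k, the constant term of an even
   m >= 2 vanishes through ((2-m)/2)_(m/2). *)
Lemma hyp_coef_eq_0 m n k : ((m < 2 * k)%nat \/ (1 <= m /\ m = 2 * k)%nat) -> hyp_coef m n k = 0.
Proof.
  intros H. unfold hyp_coef, hyp43_coef.
  destruct (Nat.Even_or_Odd m) as [[p Hp]|[p Hp]].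
  - destruct (Nat.lt_ge_cases p k) as [Hpk|Hpk].
    + rewrite (poch_eq_0 (- INR m / 2) k p Hpk); [unfold Rdiv; ring|].
      rewrite Hp, mult_INR. change (INR 2) with (1 + 1). field.
    + assert (Hm : m = (2 * k)%nat) by lia. destruct k as [|q]; [lia|].
      rewrite (poch_eq_0 ((2 - INR m) / 2) (S q) q); [unfold Rdiv; ring | lia |].
      rewrite Hm, mult_INR, (S_INR q). change (INR 2) with (1 + 1). field.
  - rewrite (poch_eq_0 ((1 - INR m) / 2) k p); [unfold Rdiv; ring | lia |].
    rewrite Hp, plus_INR, mult_INR. change (INR 2) with (1 + 1). simpl. field.
Qed.

Definition rhs_coef (m n k : nat) : R := Gamma_ratio m n * 2 ^ m * hyp_coef m n k * 4 ^ k.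

Definition rhs_poly (m n : nat) (y : R) : R :=
  sum_f_R0 (fun k => rhs_coef m n k * y ^ (m - 2 * k)) m.

Definition rhs_poly_deriv (m n : nat) (y : R) : R :=
  sum_f_R0 (fun k => rhs_coef m n k * INR (m - 2 * k) * y ^ pred (m - 2 * k)) m.

Lemma rhs_coef_eq_0 m n k : ((m < 2 * k)%nat \/ (1 <= m /\ m = 2 * k)%nat) -> rhs_coef m n k = 0.
Proof. intro H. unfold rhs_coef. rewrite hyp_coef_eq_0 by exact H. ring. Qed.

Lemma sum_f_R0_zero_tail (f : nat -> R) K0 K : (K0 <= K)%nat ->
  (forall k, (K0 < k)%nat -> f k = 0) -> sum_f_R0 f K = sum_f_R0 f K0.
Proof.
  intros HK Hz. induction HK as [|K HK IH]; [reflexivity|].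
  simpl. rewrite IH, Hz by lia. ring.
Qed.

Lemma rhs_poly_eq m n y : Gamma_ratio m n * 2 ^ m * hyp_poly m n y = rhs_poly m n y.
Proof.
  pose proof (Nat.div2_odd m) as Hdiv2.
  unfold hyp_poly, rhs_poly.
  rewrite (sum_f_R0_zero_tail _ (Nat.div2 m) m).
  - rewrite scal_sum. apply sum_eq. intros k _. unfold rhs_coef, hyp_coef. ring.
  - destruct (Nat.odd m); simpl in Hdiv2; lia.
  - intros k Hk. rewrite rhs_coef_eq_0; [ring|].
    left. destruct (Nat.odd m); simpl in Hdiv2; lia.
Qed.

(* The coefficient of y^(r+1) in the right-hand side for m = 2k+1+r. *)
Definition coef_closed (n k r : nat) : R :=
  2 ^ S r * poch (INR n + INR k + 3 / 2) r * INR (fact (k + r))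
  / (INR (fact k) * INR (fact r) * INR (fact (S r))).

Lemma INR_odd k r : INR (2 * k + 1 + r) = 2 * INR k + 1 + INR r.
Proof. rewrite !plus_INR, mult_INR. simpl. ring. Qed.

Lemma poch_upper_12 k r (m := (2 * k + 1 + r)%nat) :
  poch (- INR m / 2) k * poch ((1 - INR m) / 2) k * 4 ^ k = INR (fact m) / INR (fact (S r)).
Proof.
  replace ((1 - INR m) / 2) with (- INR m / 2 + / 2) by field.
  rewrite poch_duplication. replace (2 * (- INR m / 2)) with (- INR m) by field.
  rewrite poch_opp_nat, pow_1_even by (unfold m; lia).
  replace (m - 2 * k)%nat with (S r) by (unfold m; lia). unfold Rdiv. ring.
Qed.

Lemma poch_upper_34 k r (m := (2 * k + 1 + r)%nat) :
  poch ((1 - INR m) / 2) k * poch ((2 - INR m) / 2) k * 4 ^ k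
  = poch (1 - INR m) k * ((-1) ^ k * INR (fact (k + r)) / INR (fact r)).
Proof.
  replace ((2 - INR m) / 2) with ((1 - INR m) / 2 + / 2) by field.
  rewrite poch_duplication. replace (2 * ((1 - INR m) / 2)) with (1 - INR m) by field.
  replace (2 * k)%nat with (k + k)%nat by lia. rewrite poch_add.
  replace (1 - INR m + INR k) with (- INR (k + r)) by (unfold m; rewrite INR_odd, plus_INR; ring).
  rewrite poch_opp_nat by lia. replace (k + r - k)%nat with r by lia. reflexivity.
Qed.

Lemma Gamma_ratio_odd n k r (m := (2 * k + 1 + r)%nat) :
  Gamma_ratio m n = poch (INR n + 3 / 2) k * poch (INR n + INR k + 3 / 2) r
                    * poch (INR n + INR k + INR r + 3 / 2) k / INR (fact m).
Proof.
  replace m with (S (k + (r + k))) by (unfold m; lia). rewrite Gamma_ratio_S, !poch_add.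
  replace (INR n + 3 / 2 + INR k) with (INR n + INR k + 3 / 2) by ring.
  replace (INR n + INR k + 3 / 2 + INR r) with (INR n + INR k + INR r + 3 / 2) by ring.
  field. apply INR_fact_neq_0.
Qed.

Lemma rhs_coef_closed n k r : rhs_coef (2 * k + 1 + r) n k = coef_closed n k r.
Proof.
  set (Y := poch (INR n + INR k + INR r + 3 / 2) k).
  assert (Hlower : poch (/ 2 - INR (2 * k + 1 + r) - INR n) k = (-1) ^ k * Y).
  { replace (/ 2 - INR (2 * k + 1 + r) - INR n)
      with (- (INR (2 * k + 1 + r) + INR n - / 2)) by ring.
    rewrite poch_opp, INR_odd. unfold Y. f_equal. f_equal. field. }
  assert (Hpow : 2 ^ (2 * k + 1 + r) = 4 ^ k * 2 ^ S r).
  { replace (2 * k + 1 + r)%nat with (2 * k + S r)%nat by lia.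
    rewrite pow_add, pow_mult. f_equal. f_equal. ring. }
  assert (H1m : poch (1 - INR (2 * k + 1 + r)) k <> 0).
  { apply poch_neq_0. intros j Hj.
    assert (INR j + 1 < INR (2 * k + 1 + r)) by (rewrite <- S_INR; apply lt_INR; lia). lra. }
  pose proof (pos_INR n). pose proof (pos_INR k). pose proof (pos_INR r).
  assert (0 < poch (INR n + 3 / 2) k) by (apply poch_pos; lra).
  assert (0 < Y) by (apply poch_pos; lra).
  assert (H4 : 4 ^ k <> 0) by (apply pow_nonzero; lra).
  unfold rhs_coef, hyp_coef, hyp43_coef, coef_closed.
  rewrite Hlower, Hpow, Gamma_ratio_odd. fold Y.
  set (A1 := poch (- INR (2 * k + 1 + r) / 2) k).
  set (A2 := poch ((1 - INR (2 * k + 1 + r)) / 2) k).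
  set (A4 := poch ((2 - INR (2 * k + 1 + r)) / 2) k).
  replace (A1 * A2 * A2 * A4) with ((A1 * A2 * 4 ^ k) * (A2 * A4 * 4 ^ k) / (4 ^ k * 4 ^ k))
    by (field; exact H4).
  unfold A1, A2, A4. rewrite poch_upper_12, poch_upper_34.
  field. repeat split; try apply INR_fact_neq_0; try apply pow_nonzero; lra.
Qed.

Lemma INR_fact_S x : INR (fact (S x)) = (INR x + 1) * INR (fact x).
Proof. rewrite fact_simpl, mult_INR, S_INR. ring. Qed.

Lemma coef_closed_0 n k : coef_closed n k 0 = 2.
Proof. unfold coef_closed. rewrite Nat.add_0_r. simpl. field. apply INR_fact_neq_0. Qed.

Lemma coef_closed_0_S n r :
  (INR r + 2) * coef_closed n 0 (S r) = (2 * (INR n + 1 + INR r) + 1) * coef_closed n 0 r.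
Proof.
  unfold coef_closed. rewrite !Nat.add_0_l, poch_S, !INR_fact_S.
  change (INR 0) with 0. change (INR (fact 0)) with 1.
  pose proof (pos_INR r). simpl pow. rewrite S_INR.
  field. repeat split; try apply INR_fact_neq_0; lra.
Qed.

Lemma coef_closed_S_S n k r :
  (INR r + 2) * (coef_closed n (S k) (S r) - coef_closed n k (S r)) =
  (2 * (INR n + 2 * INR (S k) + 1 + INR r) + 1) * coef_closed n (S k) r.
Proof.
  unfold coef_closed.
  replace (S k + S r)%nat with (S (S (k + r))) by lia.
  replace (k + S r)%nat with (S (k + r)) by lia.
  replace (S k + r)%nat with (S (k + r)) by lia.
  rewrite poch_S, (poch_S_l (INR n + INR k + 3 / 2)).
  replace (INR n + INR k + 3 / 2 + 1) with (INR n + INR (S k) + 3 / 2) by (rewrite S_INR; ring).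
  rewrite !INR_fact_S. simpl pow. rewrite !S_INR, plus_INR.
  pose proof (pos_INR r). pose proof (pos_INR k).
  field. repeat split; try apply INR_fact_neq_0; lra.
Qed.

Lemma rhs_coef_SS_0 j n :
  INR (S (S j)) * rhs_coef (S (S j)) n 0 = (2 * INR (n + S j) + 1) * rhs_coef (S j) n 0.
Proof.
  replace (rhs_coef (S (S j)) n 0) with (coef_closed n 0 (S j))
    by (rewrite <- rhs_coef_closed; f_equal; lia).
  replace (rhs_coef (S j) n 0) with (coef_closed n 0 j)
    by (rewrite <- rhs_coef_closed; f_equal; lia).
  replace (INR (S (S j))) with (INR j + 2) by (rewrite !S_INR; ring).
  rewrite coef_closed_0_S, plus_INR, S_INR. ring.
Qed.

Lemma rhs_coef_SS_S j n k :
  INR (j - 2 * k) * rhs_coef (S (S j)) n (S k) =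
  INR (j - 2 * k) * rhs_coef j n k + (2 * INR (n + S j) + 1) * rhs_coef (S j) n (S k).
Proof.
  destruct (Nat.lt_ge_cases (S j) (2 * S k)) as [Hlt|Hge].
  - rewrite (rhs_coef_eq_0 (S j)) by lia.
    replace (j - 2 * k)%nat with 0%nat by lia. simpl. ring.
  - destruct (Nat.eq_dec (S j) (2 * S k)) as [Heq|Hne].
    + rewrite (rhs_coef_eq_0 (S j)) by lia.
      replace (rhs_coef (S (S j)) n (S k)) with (coef_closed n (S k) 0)
        by (rewrite <- rhs_coef_closed; f_equal; lia).
      replace (rhs_coef j n k) with (coef_closed n k 0)
        by (rewrite <- rhs_coef_closed; f_equal; lia).
      rewrite !coef_closed_0. ring.
    + set (r := (S j - 2 * S k - 1)%nat).
      replace (rhs_coef (S (S j)) n (S k)) with (coef_closed n (S k) (S r))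
        by (rewrite <- rhs_coef_closed; f_equal; unfold r; lia).
      replace (rhs_coef (S j) n (S k)) with (coef_closed n (S k) r)
        by (rewrite <- rhs_coef_closed; f_equal; unfold r; lia).
      replace (rhs_coef j n k) with (coef_closed n k (S r))
        by (rewrite <- rhs_coef_closed; f_equal; unfold r; lia).
      replace (INR (j - 2 * k)) with (INR r + 2)
        by (replace (j - 2 * k)%nat with (r + 2)%nat by (unfold r; lia);
            rewrite plus_INR; reflexivity).
      replace (INR (n + S j)) with (INR n + 2 * INR (S k) + 1 + INR r)
        by (replace (n + S j)%nat with (n + 2 * S k + 1 + r)%nat by (unfold r; lia);
            rewrite !plus_INR, mult_INR; simpl; ring).
      rewrite <- coef_closed_S_S. ring.
Qed.

Lemma is_derive_sum_pow (c : nat -> R) (e : nat -> nat) K y :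
  is_derive (fun y => sum_f_R0 (fun k => c k * y ^ e k) K) y
            (sum_f_R0 (fun k => c k * INR (e k) * y ^ pred (e k)) K).
Proof.
  induction K as [|K IH]; simpl.
  - auto_derive; auto. ring.
  - apply (is_derive_plus (fun y => sum_f_R0 (fun k => c k * y ^ e k) K)
                          (fun y => c (S K) * y ^ e (S K))); [exact IH|].
    auto_derive; auto. ring.
Qed.

Lemma is_derive_rhs_poly m n y : is_derive (rhs_poly m n) y (rhs_poly_deriv m n y).
Proof. apply (is_derive_sum_pow (rhs_coef m n) (fun k => (m - 2 * k)%nat)). Qed.

Lemma rhs_poly_0 n y : rhs_poly 0 n y = 2 / (2 * INR n + 1).
Proof.
  unfold rhs_poly, rhs_coef, hyp_coef, hyp43_coef. simpl sum_f_R0.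
  rewrite Gamma_ratio_0. simpl. field. pose proof (pos_INR n). lra.
Qed.

Lemma rhs_poly_1 n y : rhs_poly 1 n y = 2 * y.
Proof.
  unfold rhs_poly. simpl sum_f_R0.
  rewrite (rhs_coef_eq_0 1 n 1) by lia.
  change 1%nat with (2 * 0 + 1 + 0)%nat at 1. rewrite rhs_coef_closed, coef_closed_0.
  simpl. ring.
Qed.

Lemma rhs_poly_SS_0 j n : rhs_poly (S (S j)) n 0 = 0.
Proof.
  apply sum_eq_R0. intros k Hk.
  destruct (Nat.lt_ge_cases (2 * k) (S (S j))) as [H|H].
  - rewrite pow_i by lia. ring.
  - rewrite rhs_coef_eq_0 by lia. ring.
Qed.

Lemma rhs_poly_deriv_SS j n y :
  rhs_poly_deriv (S (S j)) n y = rhs_poly_deriv j n y + (2 * INR (n + S j) + 1) * rhs_poly (S j) n y.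
Proof.
  unfold rhs_poly_deriv, rhs_poly.
  set (T k := match k with
              | O => 0
              | S k' => rhs_coef j n k' * INR (j - 2 * k') * y ^ pred (j - 2 * k')
              end).
  assert (Hj : sum_f_R0 (fun k => rhs_coef j n k * INR (j - 2 * k) * y ^ pred (j - 2 * k)) j
               = sum_f_R0 T (S (S j))).
  { rewrite (decomp_sum T) by lia. change (pred (S (S j))) with (S j).
    rewrite (sum_f_R0_zero_tail (fun i => T (S i)) j (S j)); [| lia |].
    - unfold T at 1. rewrite Rplus_0_l. reflexivity.
    - intros k Hk. unfold T. rewrite rhs_coef_eq_0 by lia. ring. }
  assert (HSj : sum_f_R0 (fun k => rhs_coef (S j) n k * y ^ (S j - 2 * k)) (S j)
                = sum_f_R0 (fun k => rhs_coef (S j) n k * y ^ (S j - 2 * k)) (S (S j))).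
  { symmetry. apply sum_f_R0_zero_tail; [lia|].
    intros k Hk. rewrite rhs_coef_eq_0 by lia. ring. }
  rewrite Hj, HSj, scal_sum, <- sum_plus.
  apply sum_eq. intros k _. unfold T. destruct k as [|k].
  - rewrite Nat.mul_0_r, !Nat.sub_0_r. simpl pred.
    rewrite (Rmult_comm (rhs_coef (S (S j)) n 0)), rhs_coef_SS_0. ring.
  - replace (S (S j) - 2 * S k)%nat with (j - 2 * k)%nat by lia.
    replace (S j - 2 * S k)%nat with (pred (j - 2 * k)) by lia.
    rewrite (Rmult_comm (rhs_coef (S (S j)) n (S k))), rhs_coef_SS_S. ring.
Qed.

Theorem theorem5 (m n : nat) (y : R) :
  Rmn m n y =
  Gamma (INR m + INR n + / 2) / (Gamma (INR m + 1) * Gamma (INR n + 3 / 2))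
  * 2 ^ m * hyp_poly m n y.
Proof.
  change (Gamma (INR m + INR n + / 2) / (Gamma (INR m + 1) * Gamma (INR n + 3 / 2)))
    with (Gamma_ratio m n).
  rewrite rhs_poly_eq. revert m y.
  apply (Rmn_unique n (fun m => rhs_poly m n) (fun m => rhs_poly_deriv m n)).
  - intros m y. apply is_derive_rhs_poly.
  - intro y. apply rhs_poly_0.
  - intro y. apply rhs_poly_1.
  - intros j y. apply rhs_poly_deriv_SS.
  - intro j. apply rhs_poly_SS_0.
Qed.
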